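(* Let $m\ge 2$ be even, $n\ge1$, and let $\mathcal{T}=(t_{i_1\cdots i_m})\in\mathbb{R}^{[m,n]}$ be a Nekrasov $Z$ tensor with all diagonal elements $t_{i\cdots i}>0$. Let $$W=\mathrm{diag}(w_1,\dots,w_n),\qquad w_i=\Big(\frac{\Lambda_i(\mathcal{T})}{t_{i i\cdots i}}\Big)^{\frac{1}{m-1}}.$$ Then the tensor $\mathcal{T}W=(b_{i_1\cdots i_m})$, with entries $b_{i_1 i_2\cdots i_m}=t_{i_1 i_2\cdots i_m}w_{i_2}\cdots w_{i_m}$, is a diagonally dominant $Z$ tensor, i.e. all its off-diagonal entries are nonpositive and $|b_{i\cdots i}|\ge\sum_{(i_2,\dots,i_m)\neq(i,\dots,i)}|b_{i i_2\cdots i_m}|$ for all $i\in[n]$.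
   Context: $[n]=\{1,\dots,n\}$ and $\mathbb{R}^{[m,n]}$ denotes the set of real tensors $\mathcal{T}=(t_{i_1\cdots i_m})$ with $i_1,\dots,i_m\in[n]$. A diagonal element is $t_{i\cdots i}$; all other entries are off-diagonal. $\mathcal{T}$ is a $Z$ tensor if all its off-diagonal entries are nonpositive. For $\mathcal{T}$ with $t_{i\cdots i}\neq 0$ for all $i$, define $R_i(\mathcal{T})=\sum_{(i_2,\dots,i_m)\neq(i,\dots,i)}|t_{i i_2\cdots i_m}|$, $\Lambda_1(\mathcal{T})=R_1(\mathcal{T})$, and for $i=2,\dots,n$ $$\Lambda_i(\mathcal{T})=\sum_{(i_2,\dots,i_m)\in[i-1]^{m-1}}|t_{i i_2\cdots i_m}|\Big(\tfrac{\Lambda_{i_2}(\mathcal{T})}{|t_{i_2\cdots i_2}|}\Big)^{\frac{1}{m-1}}\cdots\Big(\tfrac{\Lambda_{i_m}(\mathcal{T})}{|t_{i_m\cdots i_m}|}\Big)^{\frac{1}{m-1}}+\sum_{(i_2,\dots,i_m)\notin[i-1]^{m-1},\ (i_2,\dots,i_m)\neq(i,\dots,i)}|t_{i i_2\cdots i_m}|.$$ $\mathcal{T}$ is a Nekrasov tensor if $|t_{i\cdots i}|>\Lambda_i(\mathcal{T})$ for all $i\in[n]$; a Nekrasov $Z$ tensor is one that is both a Nekrasov tensor and a $Z$ tensor. A tensor $\mathcal{B}=(b_{i_1\cdots i_m})$ is diagonally dominant if $|b_{i\cdots i}|\ge\sum_{(i_2,\dots,i_m)\neq(i,\dots,i)}|b_{i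 i_2\cdots i_m}|$ for every $i$. The product $\mathcal{T}W$ of a tensor with a diagonal matrix is the general tensor product of Shao, which here gives the entry formula stated in the claim. *)

From HB Require Import structures.
From mathcomp Require Import all_boot all_order all_algebra.
From mathcomp Require Import reals exp.
Set Implicit Arguments. Unset Strict Implicit. Unset Printing Implicit Defensive.
Import Order.TTheory GRing.Theory Num.Theory.
Local Open Scope ring_scope.

(* An order-m, dimension-n real tensor T = (t_{i1 i2 ... im}) is represented
   curried in its first index: T i1 tl = t_{i1 tl(0) ... tl(m-2)}, where the
   tail tl : {ffun 'I_(m.-1) -> 'I_n} lists (i2,...,im). Indices are 0-based. *)
Definition tail_t (m n : nat) := {ffun 'I_m.-1 -> 'I_n}.
Definition tensor (R : Type) (m n : nat) := 'I_n -> tail_t m n -> R.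

Definition dtail (m n : nat) (i : 'I_n) : tail_t m n := [ffun _ => i].

Definition Z_tensor (R : realType) (m n : nat) (T : tensor R m n) : Prop :=
  forall (i : 'I_n) (tl : tail_t m n), tl != dtail m i -> T i tl <= 0.

Definition root_m (R : realType) (m : nat) (x : R) : R := powR x (m.-1%:R)^-1.

(* one step of the recursion: Lambda_i computed from prev, the values
   Lambda_j for j < i (values of prev at j >= i are not used). *)
Definition Lam_step (R : realType) (m n : nat) (T : tensor R m n)
    (prev : 'I_n -> R) (i : 'I_n) : R :=
  \sum_(tl : tail_t m n | tl != dtail m i)
     if [forall k, (tl k < i)%N] then
       `|T i tl| * \prod_(k < m.-1) root_m m (prev (tl k) / `|T (tl k) (dtail m (tl k))|)
     else `|T i tl|.

(* LamUpTo k j = Lambda_j for every j < k *)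
Fixpoint LamUpTo (R : realType) (m n : nat) (T : tensor R m n) (k : nat) : 'I_n -> R :=
  match k with
  | 0 => fun _ => 0
  | k'.+1 => fun i => if (i < k')%N then LamUpTo T k' i else Lam_step T (LamUpTo T k') i
  end.

(* Lambda_i(T) of the paper (0-based index i); Lambda_0 = R_0(T). *)
Definition Lambda (R : realType) (m n : nat) (T : tensor R m n) (i : 'I_n) : R :=
  LamUpTo T i.+1 i.

Definition Nekrasov (R : realType) (m n : nat) (T : tensor R m n) : Prop :=
  forall i : 'I_n, T i (dtail m i) != 0 /\ Lambda T i < `|T i (dtail m i)|.

Definition diag_dominant (R : realType) (m n : nat) (B : tensor R m n) : Prop :=
  forall i : 'I_n,
    \sum_(tl : tail_t m n | tl != dtail m i) `|B i tl| <= `|B i (dtail m i)|.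

Definition nek_weight (R : realType) (m n : nat) (T : tensor R m n) (i : 'I_n) : R :=
  root_m m (Lambda T i / T i (dtail m i)).

Definition tensor_mul_diag (R : realType) (m n : nat) (T : tensor R m n)
    (w : 'I_n -> R) : tensor R m n :=
  fun i tl => T i tl * \prod_(k < m.-1) w (tl k).

(* The weight w_j is chosen so that w_j^(m-1) t_{j...j} = Lambda_j: the diagonal entry of T W
   is then exactly Lambda_i.  Off the diagonal, |b_{i i2...im}| = |t_{i i2...im}| w_{i2}...w_{im};
   when all of i2,...,im precede i this is precisely the corresponding summand of Lambda_i, and
   otherwise it is at most the summand |t_{i i2...im}| because every w_j <= 1 by the Nekrasov
   condition.  Summing gives diagonal dominance; the Z sign pattern survives since w >= 0. *)
From HB Require Import structures.
From mathcomp Require Import all_boot all_order all_algebra.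
From mathcomp Require Import reals exp.
Import Order.TTheory GRing.Theory Num.Theory.
Local Open Scope ring_scope.

Section Lambda.
Variables (R : realType) (m n : nat) (T : tensor R m n).

Lemma LamUpTo_lt (j : 'I_n) k : (j < k)%N -> LamUpTo T k j = Lambda T j.
Proof.
move=> /subnKC <-; elim: (k - j.+1)%N => [|d IHd]; first by rewrite addn0.
by rewrite addnS /= ltnS leq_addr.
Qed.

Lemma Lambda_rec (i : 'I_n) : Lambda T i = Lam_step T (Lambda T) i.
Proof.
rewrite /Lambda /= ltnn /Lam_step; apply: eq_bigr => tl _.
case: ifP => [/forallP tl_lt | _] //; congr (_ * _); apply: eq_bigr => k _.
by rewrite LamUpTo_lt.
Qed.

Lemma Lambda_ge0 (i : 'I_n) : 0 <= Lambda T i.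
Proof.
rewrite Lambda_rec; apply: sumr_ge0 => tl _.
by case: ifP => _ //; rewrite mulr_ge0 // prodr_ge0 // => k _; apply: powR_ge0.
Qed.

End Lambda.

Section RootM.
Variables (R : realType) (m : nat).

Lemma root_m_ge0 (x : R) : 0 <= root_m m x.
Proof. exact: powR_ge0. Qed.

Lemma root_m_le1 (x : R) : 0 <= x -> x <= 1 -> root_m m x <= 1.
Proof.
move=> x_ge0 x_le1; apply: (@le_trans _ _ (1 `^ (m.-1%:R)^-1)); last by rewrite powR1.
by apply: ge0_ler_powR; rewrite ?nnegrE ?invr_ge0 ?ler0n.
Qed.

Lemma root_mK (x : R) : (1 < m)%N -> 0 <= x -> root_m m x ^+ m.-1 = x.
Proof.
move=> m_gt1 x_ge0; rewrite -powR_mulrn ?root_m_ge0 // -powRrM mulVf ?powRr1 //.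
by rewrite pnatr_eq0 -lt0n -ltnS prednK // ltnW.
Qed.

End RootM.

Section MulDiag.
Variables (R : realType) (m n : nat) (T : tensor R m n) (w : 'I_n -> R).
Hypothesis w_ge0 : forall j, 0 <= w j.

Lemma Z_tensor_mul_diag : Z_tensor T -> Z_tensor (tensor_mul_diag T w).
Proof.
move=> T_Z i tl tl_off; rewrite /tensor_mul_diag.
by apply: mulr_le0_ge0; [exact: T_Z | exact: prodr_ge0].
Qed.

Lemma normr_tensor_mul_diag i tl :
  `|tensor_mul_diag T w i tl| = `|T i tl| * \prod_(k < m.-1) w (tl k).
Proof. by rewrite normrM [`|\prod_(k < _) _|]ger0_norm //; apply: prodr_ge0. Qed.

Lemma tensor_mul_diag_dtail i :
  tensor_mul_diag T w i (dtail m i) = T i (dtail m i) * w i ^+ m.-1.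
Proof.
by rewrite /tensor_mul_diag (eq_bigr (fun=> w i)) ?prodr_const ?card_ord // => k _; rewrite ffunE.
Qed.

End MulDiag.

Section NekrasovWeight.
Variables (R : realType) (m n : nat) (T : tensor R m n).
Hypothesis m_gt1 : (1 < m)%N.
Hypothesis diag_gt0 : forall i, 0 < T i (dtail m i).
Hypothesis Lambda_le_diag : forall i, Lambda T i <= T i (dtail m i).

Let Lambda_div_ge0 j : 0 <= Lambda T j / T j (dtail m j).
Proof. by rewrite divr_ge0 ?Lambda_ge0 ?ltW. Qed.

Lemma nek_weightE j :
  nek_weight T j = root_m m (Lambda T j / `|T j (dtail m j)|).
Proof. by rewrite gtr0_norm. Qed.

Lemma nek_weight_ge0 j : 0 <= nek_weight T j.
Proof. exact: root_m_ge0. Qed.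

Lemma nek_weight_le1 j : nek_weight T j <= 1.
Proof. by rewrite root_m_le1 // ler_pdivrMr // mul1r. Qed.

Lemma nek_weight_dtail i : tensor_mul_diag T (nek_weight T) i (dtail m i) = Lambda T i.
Proof.
rewrite tensor_mul_diag_dtail root_mK // mulrCA divff ?mulr1 //.
by rewrite gt_eqF.
Qed.

Lemma diag_dominant_nek_weight : diag_dominant (tensor_mul_diag T (nek_weight T)).
Proof.
move=> i; rewrite nek_weight_dtail ger0_norm ?Lambda_ge0 // Lambda_rec.
apply: ler_sum => tl _; rewrite normr_tensor_mul_diag; last exact: nek_weight_ge0.
case: ifP => _.
  by under eq_bigr do rewrite nek_weightE.
rewrite ler_piMr // prodr_ile1 // => k _.
by rewrite nek_weight_ge0 nek_weight_le1.
Qed.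

End NekrasovWeight.

Theorem mainTheorem2 (R : realType) (m n : nat) (T : tensor R m n) :
  (2 <= m)%N -> ~~ odd m -> (1 <= n)%N ->
  Z_tensor T -> Nekrasov T ->
  (forall i : 'I_n, 0 < T i (dtail m i)) ->
  Z_tensor (tensor_mul_diag T (nek_weight T)) /\
  diag_dominant (tensor_mul_diag T (nek_weight T)).
Proof.
move=> m_gt1 _ _ T_Z T_nek diag_gt0.
have Lambda_le_diag i : Lambda T i <= T i (dtail m i).
  by have [_ /ltW] := T_nek i; rewrite gtr0_norm.
split; first exact/Z_tensor_mul_diag/T_Z/nek_weight_ge0.
exact: diag_dominant_nek_weight.
Qed.
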